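(* Let $T'=(m_1,\dots,m_p)$ be a pseudo type vector, let $\mathbb X\subset\mathbb P^2$ be the standard pseudo linear configuration of type $T'$, and let $\Delta T'=(m_1,m_2-m_1,\dots,m_p-m_{p-1})$. Then: (i) $\mathbb X$ can be obtained from the empty scheme by a finite sequence of basic double links; (ii) the first difference of the Hilbert function of $\mathbb X$ is the standard O-sequence associated to $T'$; (iii) assume that between any two zero entries of $\Delta T'$ there is at least one entry $>1$. If $\Delta T'$ ends with a $0$, or ends with a $0$ followed by some number of $1$'s, then the regularity of $\mathbb X$ is $m_p+1$; otherwise the regularity is $m_p$; (iv) if $\Delta T'$ has two zero entries between which there is no entry $>1$, then the regularity of $\mathbb X$ may be arbitrarily larger than $m_p$ (i.e. for every $N$ there are such pseudo type vectors whose standard pseudo linear configuration has regularity $\ge m_p+N$).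
   Context: Work over an infinite field $k$ of characteristic zero, $R=k[x_0,x_1,x_2]$, $\mathbb P^2=\operatorname{Proj}R$. A pseudo type vector is a sequence $(m_1,\dots,m_p)$ of positive integers with $m_1\le\cdots\le m_p$ such that whenever $m_{i-1}=m_i$ we have $m_i<m_{i+1}$. The standard pseudo linear configuration of type $(m_1,\dots,m_p)$ consists, for each $i=1,\dots,p$, of the $m_i$ points $[j:p-i:1]$, $0\le j\le m_i-1$. For a zero-dimensional scheme $\mathbb Y$ with saturated ideal $I_{\mathbb Y}$, $h_{\mathbb Y}(t)=\dim_k(R/I_{\mathbb Y})_t$, $\Delta h(t)=h(t)-h(t-1)$ (with $h(t)=0$ for $t<0$), and the regularity of $\mathbb Y$ is the least $t$ with $\Delta h_{\mathbb Y}(t)=0$ (equivalently $\min\{t:h^1(\mathcal I_{\mathbb Y}(t-1))=0\}$). Standard O-sequence: set $m_0=0$, $m_{p+1}=\infty$. For each $i$: if $m_{i-1}<m_i<m_{i+1}$, let $s_i$ be the sequence with $(s_i)_t=1$ for $0\le t\le m_i-1$ and $0$ otherwise; if $m_{i-1}=m_i<m_{i+1}$, let $(s_i)_0=1$, $(s_i)_t=2$ for $1\le t\le m_i-1$, $(s_i)_{m_i}=1$, and $0$ otherwise; if $m_{i-1}<m_i=m_{i+1}$, $s_i$ is not defined. For a sequence $s$ and $k\ge0$, $s(-k)$ is $s$ shifted right by $k$ places ($s(-k)_t=s_{t-k}$). The standard O-sequence associated to $T'$ is $\sum_i s_i(i-p)$, the sum over those $i$ for which $s_i$ is defined (so $s_i$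 is shifted right by $p-i$). Basic double link: if $\mathbb Y$ is a zero-dimensional subscheme (or empty, with ideal $R$), $F\in I_{\mathbb Y}$ and $G$ are homogeneous forms with $F,G$ a regular sequence, then $G\cdot I_{\mathbb Y}+(F)$ is the saturated ideal of a zero-dimensional scheme, called a basic double link of $\mathbb Y$. *)

From HB Require Import structures.
From mathcomp Require Import all_boot all_order all_algebra.
From mathcomp Require Import mpoly.
Set Implicit Arguments.
Unset Strict Implicit.
Unset Printing Implicit Defensive.
Import Order.TTheory GRing.Theory Num.Theory.
Local Open Scope ring_scope.

(* ---------- pseudo type vectors (0-based: m_{i+1} = T`_i) ---------- *)
Definition pseudo_type_vector (T : seq nat) : Prop :=
  (0 < size T)%N /\
  (forall i, (i < size T)%N -> (0 < nth 0%N T i)%N) /\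
  (forall i, (i.+1 < size T)%N -> (nth 0%N T i <= nth 0%N T i.+1)%N) /\
  (forall i, (i.+2 < size T)%N -> nth 0%N T i = nth 0%N T i.+1 ->
       (nth 0%N T i.+1 < nth 0%N T i.+2)%N).

Definition deltaT (T : seq nat) (i : nat) : nat :=
  if i is j.+1 then (nth 0%N T j.+1 - nth 0%N T j)%N else nth 0%N T 0.

Definition point (k : fieldType) (a b c : k) : 'rV[k]_3 :=
  \row_(i < 3) nth 0 [:: a; b; c] i.

Definition std_config (k : fieldType) (T : seq nat) : seq 'rV[k]_3 :=
  flatten [seq [seq point (j%:R) ((size T - i.+1)%:R) 1 | j <- iota 0 (nth 0%N T i)]
          | i <- iota 0 (size T)].

Notation R3 k := {mpoly k[3]}.

Definition ev (k : fieldType) (P : 'rV[k]_3) (f : R3 k) : k := f.@[fun i => P 0 i].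

Definition homog_of_deg (k : fieldType) (d : nat) (f : R3 k) : bool :=
  all (fun m : 'X_{1..3} => mdeg m == d) (msupp f).

Definition hcomp (k : fieldType) (d : nat) (f : R3 k) : R3 k :=
  \sum_(m <- msupp f | mdeg m == d) f@_m *: 'X_[m].

(* saturated (= homogeneous vanishing) ideal of a reduced finite set of points *)
Definition vanishing_ideal (k : fieldType) (X : seq 'rV[k]_3) (f : R3 k) : Prop :=
  forall d P, P \in X -> ev P (hcomp d f) = 0.

Definition monoms (t : nat) := {m : 'X_{1..3 < t.+1} | mdeg m == t}.

(* h_X(t) = dim (R/I_X)_t = rank of the evaluation map R_t -> k^X,
   whose kernel is (I_X)_t *)
Definition hilb (k : fieldType) (X : seq 'rV[k]_3) (t : nat) : nat :=
  \rank (\matrix_(m < #|{: monoms t}|, j < size X)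
           ev (nth 0 X j) 'X_[val (val (enum_val m))] : 'M[k]_(_, _)).

(* first difference, with h(t) = 0 for t < 0 *)
Definition dhilb (k : fieldType) (X : seq 'rV[k]_3) (t : nat) : int :=
  if t is s.+1 then (hilb X s.+1)%:Z - (hilb X s)%:Z else (hilb X 0)%:Z.

Definition is_regularity (k : fieldType) (X : seq 'rV[k]_3) (r : nat) : Prop :=
  dhilb X r = 0 /\ forall t, (t < r)%N -> dhilb X t <> 0.

Definition s_seq (T : seq nat) (i t : nat) : nat :=
  let mi := nth 0%N T i in
  let prev := if i is j.+1 then nth 0%N T j else 0%N in
  if (i.+1 < size T)%N && (nth 0%N T i.+1 == mi) then 0%N (* s_i undefined *)
  else if prev == mi then
    (if t == 0%N then 1%N else if (t <= mi.-1)%N then 2%N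
     else if t == mi then 1%N else 0%N)
  else (if (t < mi)%N then 1%N else 0%N).

(* sum_i s_i shifted right by p - i (1-based i), i.e. size T - i.+1 (0-based) *)
Definition std_O_seq (T : seq nat) (t : nat) : nat :=
  \sum_(i < size T)
     (if (size T - i.+1 <= t)%N then s_seq T i (t - (size T - i.+1)) else 0%N).

Definition ideal_gen1 (k : fieldType) (F : R3 k) (h : R3 k) : Prop :=
  exists c, h = F * c.

Definition regular_seq2 (k : fieldType) (F G : R3 k) : Prop :=
  F != 0 /\
  (forall h, ideal_gen1 F (G * h) -> ideal_gen1 F h) /\
  ~ (exists a b, 1 = F * a + G * b).

Definition bdl_ideal (k : fieldType) (I : R3 k -> Prop) (F G : R3 k) (h : R3 k) : Prop :=
  exists a b, I a /\ h = G * a + F * b.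

Inductive bdl_obtainable (k : fieldType) : (R3 k -> Prop) -> Prop :=
| bdl_empty : bdl_obtainable (fun _ => True)
| bdl_step (I : R3 k -> Prop) (F G : R3 k) (dF dG : nat) :
    bdl_obtainable I -> I F -> homog_of_deg dF F -> homog_of_deg dG G ->
    regular_seq2 F G -> bdl_obtainable (bdl_ideal I F G).

(* Add the rows of the configuration one at a time, top row first.  A new row
   of m points [j : c : 1] lies on the line x1 = c x2, which misses the earlier
   points, and on the m lines x0 = j x2, whose product A vanishes on them (rows
   only lengthen downwards); so the ideal grows as I' = (x1 - c x2) I + (A), a
   basic double link.  In affine coordinates the configuration is the lower set
   C = {(a, b) : a < m_(p-b)} of N^2; in the basis of products of falling
   factorials x(x-1)...(x-a+1) y(y-1)...(y-b+1) the evaluation map on forms of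
   degree t becomes triangular, so h(t) = #{(a, b) in C : a + b <= t}.  Hence
   Delta h(t) counts the rows whose cells meet the antidiagonal a + b = t; the
   row at height b = p - i (1-based i) does so for b <= t < b + m_i.  This sum
   is the standard O-sequence, and the regularity is the largest endpoint
   p - i + m_i.  Consecutive endpoints differ by Delta_i - 1, which gives (iii);
   for (iv) the type (1, 1, 2, 2, ..., n, n) has regularity 2n = m_p + n. *)

From HB Require Import structures.
From mathcomp Require Import all_boot all_order all_algebra.
From mathcomp Require Import mpoly.
From mathcomp Require Import zify ring.
Set Implicit Arguments.
Unset Strict Implicit.
Unset Printing Implicit Defensive.
Import GRing.Theory.

Lemma base_digits_inj (n N : nat) (d d' : 'I_n -> nat) :
  (forall i, d i < N) -> (forall i, d' i < N) ->
  \sum_(i < n) d i * N ^ i = \sum_(i < n) d' i * N ^ i -> d =1 d'.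
Proof.
elim: n d d' => [|n IH] d d' ltdN ltd'N + i; first by case: i.
have expand (e : 'I_n.+1 -> nat) : \sum_(i < n.+1) e i * N ^ i =
    (\sum_(i < n) e (lift ord0 i) * N ^ i) * N + e ord0.
  rewrite big_ord_recl muln1 addnC big_distrl /=; congr (_ + _).
  by apply: eq_bigr => j _; rewrite expnS mulnCA mulnC.
have N_gt0 : 0 < N by have := ltdN i; lia.
rewrite !expand => eq_sum.
have eq0 : d ord0 = d' ord0.
  by have := congr1 (modn^~ N) eq_sum; rewrite /= !modnMDl !modn_small.
move: eq_sum; rewrite eq0 => /addIn /eqP; rewrite eqn_pmul2r // => /eqP /IH eq_lift.
by case: (unliftP ord0 i) => [j ->|->]; [apply: eq_lift | ].
Qed.

Lemma iota0S n : iota 0 n.+1 = rcons (iota 0 n) n.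
Proof. by rewrite -cats1 -addn1 iotaD. Qed.

Lemma first_counterexample (P : pred nat) i n :
  (forall c, i < c < n -> P c) \/
  exists c, [/\ i < c < n, ~~ P c & forall j, i < j < c -> P j].
Proof.
elim: n => [|n [all_P|[c [lt_c nPc P_before]]]].
- by left => c; rewrite ltn0 andbF.
- have [/andP [lt_in nPn]|] := boolP ((i < n) && ~~ P n).
    by right; exists n; split => [|//|j lt_j]; [lia | apply: all_P; lia].
  rewrite negb_and negbK => /orP [le_ni|Pn]; left => c lt_c.
    by apply: all_P; lia.
  by have [->//|ne_cn] := eqVneq c n; apply: all_P; lia.
- by right; exists c; split => //; lia.
Qed.

Definition x0 : 'I_3 := ord0.
Definition x1 : 'I_3 := @Ordinal 3 1 isT.
Definition x2 : 'I_3 := @Ordinal 3 2 isT.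

Lemma ord3_ind (P : 'I_3 -> Prop) : P x0 -> P x1 -> P x2 -> forall i, P i.
Proof.
move=> P0 P1 P2 [[|[|[|//]]] lti];
  [have -> : Ordinal lti = x0 | have -> : Ordinal lti = x1 | have -> : Ordinal lti = x2];
  by [|apply: val_inj].
Qed.

Lemma big_ord3 (R : Type) (idx : R) (op : R -> R -> R) (F : 'I_3 -> R) :
  \big[op/idx]_(i < 3) F i = op (F x0) (op (F x1) (op (F x2) idx)).
Proof.
rewrite !big_ord_recl big_ord0.
by congr (op (F _) (op (F _) (op (F _) _))); apply: val_inj.
Qed.

Lemma pseudo_type_vector_mono T : pseudo_type_vector T ->
  forall i j, i <= j < size T -> nth 0 T i <= nth 0 T j.
Proof.
move=> [_ [_ [T_mono _]]] i j; elim: j => [|j IH]; first by rewrite leqn0 => /andP [/eqP ->].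
case/andP; rewrite leq_eqVlt => /orP [/eqP -> //|lt_ij lt_jT].
by apply: leq_trans (T_mono j lt_jT); apply: IH; lia.
Qed.

Section Char0Field.
Variable k : fieldType.
Local Open Scope ring_scope.
Hypothesis k_char0 : [pchar k] =i pred0.

Lemma eqr_nat_pchar0 (a b : nat) : (a%:R == b%:R :> k) = (a == b).
Proof.
wlog le_ab : a b / (a <= b)%N => [sym|].
  by case: (leqP a b) => [/sym //|/ltnW/sym]; rewrite eq_sym [(b == a)]eq_sym.
rewrite eq_sym -subr_eq0 -natrB // ((pcharf0P k).1 k_char0) subn_eq0.
by rewrite eqn_leq le_ab.
Qed.

Lemma poly_vanish_eq0 (q : {poly k}) :
  (forall x, x != 0 -> q.[x] = 0) -> q = 0.
Proof.
move=> q_vanish; apply/eqP; apply: contraT => q_neq0.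
pose rs := [seq i.+1%:R | i <- iota 0 (size q)] : seq k.
have rs_roots : all (root q) rs.
  apply/allP => _ /mapP [i _ ->]; apply/rootP/q_vanish.
  by rewrite ((pcharf0P k).1 k_char0).
have rs_uniq : uniq rs.
  by rewrite map_inj_uniq ?iota_uniq // => a b /eqP; rewrite eqr_nat_pchar0 => /eqP [].
by have := max_poly_roots q_neq0 rs_roots rs_uniq; rewrite size_map size_iota ltnn.
Qed.

(* Kronecker substitution x_i := t ^ (N ^ i), with N bounding every exponent
   of f, sends distinct monomials of f to distinct powers of t. *)
Lemma mpoly_vanish_eq0 n (f : {mpoly k[n]}) : (forall v, f.@[v] = 0) -> f = 0.
Proof.
move=> f_vanish; pose N := msize f.
pose e (m : 'X_{1..n}) := (\sum_(i < n) m i * N ^ i)%N.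
pose q := \sum_(m <- msupp f) f@_m *: ('X^(e m) : {poly k}).
have q0 : q = 0.
  apply: poly_vanish_eq0 => t _; rewrite -(f_vanish (fun i => t ^+ (N ^ i))).
  rewrite mevalE horner_sum; apply: eq_bigr => m _.
  rewrite hornerZ hornerXn -prodrXr; congr (_ * _); apply: eq_bigr => i _.
  by rewrite -exprM mulnC.
have exponent_lt m : m \in msupp f -> forall i, (m i < N)%N.
  move=> /msize_mdeg_lt lt_mN i; apply: leq_ltn_trans lt_mN.
  by rewrite mdegE (bigD1 i) //= leq_addr.
have e_inj : {in msupp f &, injective e}.
  move=> m m' fm fm' /(base_digits_inj (exponent_lt m fm) (exponent_lt m' fm')).
  by move/mnmP.
apply/mpolyP => m; rewrite mcoeff0.
have [fm|/memN_msupp_eq0 //] := boolP (m \in msupp f).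
have := congr1 (fun p : {poly k} => p`_(e m)) q0.
rewrite /= coef0 coef_sum (bigD1_seq m) ?msupp_uniq //= coefZ coefXn eqxx mulr1.
rewrite big1_seq ?addr0 // => m' /andP [m'_neq_m fm'].
by rewrite coefZ coefXn (inj_in_eq e_inj) // eq_sym (negbTE m'_neq_m) mulr0.
Qed.

Lemma meval_hcomp d (f : R3 k) v :
  (hcomp d f).@[v] = \sum_(m <- msupp f | mdeg m == d) f@_m * \prod_i v i ^+ m i.
Proof. by rewrite /hcomp raddf_sum; apply: eq_bigr => m _ /=; rewrite mevalZ mevalX. Qed.

Lemma meval_scale (f : R3 k) v (l : k) :
  f.@[fun i => l * v i] = \sum_(d < msize f) l ^+ d * (hcomp d f).@[v].
Proof.
under eq_bigr do rewrite meval_hcomp big_distrr /= big_mkcond /=.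
rewrite exchange_big /= mevalE !big_seq; apply: eq_bigr => m fm.
rewrite -big_mkcond /= (big_pred1 (Ordinal (msize_mdeg_lt fm))); last first.
  by move=> d; rewrite /= eq_sym -val_eqE.
rewrite /= mulrCA mdegE -prodrXr -big_split /=; congr (_ * _).
by apply: eq_bigr => i _; rewrite exprMn.
Qed.

Lemma vanishing_idealP X (f : R3 k) : vanishing_ideal X f <->
  (forall P, P \in X -> forall l, l != 0 -> f.@[fun i => l * P 0 i] = 0).
Proof.
split=> [f_vanish P XP l _ | f_vanish d P XP].
  by rewrite meval_scale big1 // => d _; rewrite [_.@[_]]f_vanish ?mulr0.
have [lt_d|le_d] := ltnP d (msize f); last first.
  rewrite /ev meval_hcomp big1_seq // => m /andP [/eqP mdeg_d /msize_mdeg_lt].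
  by rewrite mdeg_d ltnNge le_d.
pose q := \poly_(i < msize f) (hcomp i f).@[fun i => P 0 i].
have q0 : q = 0.
  apply: poly_vanish_eq0 => l l_neq0; rewrite horner_poly.
  rewrite -[RHS](f_vanish P XP l l_neq0) meval_scale.
  by apply: eq_bigr => i _; rewrite mulrC.
have := coef_poly (msize f) (fun i => (hcomp i f).@[fun i => P 0 i]) d.
by rewrite -/q q0 coef0 lt_d.
Qed.

Definition subst_var n (v w : 'I_n) (c : k) (u : 'I_n -> k) : 'I_n -> k :=
  fun i => if i == v then c * u w else u i.

Lemma mpoly_div_linear n (v w : 'I_n) (c : k) (f : {mpoly k[n]}) :
  exists q g, f = ('X_v - c *: 'X_w) * q + g /\
    forall u, g.@[u] = f.@[subst_var v w c u].
Proof.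
pose L := 'X_v - c *: 'X_w.
pose divisible f := exists q g, f = L * q + g /\
  forall u, g.@[u] = f.@[subst_var v w c u].
have divisibleD f1 f2 : divisible f1 -> divisible f2 -> divisible (f1 + f2).
  rewrite /divisible => -[q1 [g1 [f1E g1E]]] [q2 [g2 [f2E g2E]]].
  exists (q1 + q2), (g1 + g2); split; first by rewrite f1E f2E; ring.
  by move=> u; rewrite !mevalD g1E g2E.
have divisibleM f1 f2 : divisible f1 -> divisible f2 -> divisible (f1 * f2).
  rewrite /divisible => -[q1 [g1 [f1E g1E]]] [q2 [g2 [f2E g2E]]].
  exists (q1 * (L * q2 + g2) + g1 * q2), (g1 * g2).
  split; first by rewrite f1E f2E; ring.
  by move=> u; rewrite !mevalM g1E g2E.
have divisibleC a : divisible a%:MP.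
  by exists 0, a%:MP; split=> [|u]; rewrite ?mulr0 ?add0r ?mevalC.
have divisibleX i : divisible 'X_i.
  have [->|i_neq_v] := eqVneq i v.
    exists 1, (c *: 'X_w); split=> [|u]; first by rewrite mulr1 subrK.
    by rewrite mevalZ !mevalXU /subst_var eqxx.
  exists 0, 'X_i; split=> [|u]; first by rewrite mulr0 add0r.
  by rewrite !mevalXU /subst_var (negbTE i_neq_v).
rewrite [f]mpolyE; apply: (big_ind divisible) => [|//|m _].
  by rewrite -mpolyC0.
rewrite -mul_mpolyC mpolyXE_id; apply: (divisibleM _ _ (divisibleC _)).
apply: (big_ind divisible) => [|//|i _]; first by rewrite -mpolyC1.
elim: (m i) => [|e IHe]; first by rewrite expr0 -mpolyC1.
by rewrite exprS; apply: divisibleM.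
Qed.

(** * The configuration as a sequence of basic double links *)

Lemma point_coords (a b c : k) :
  [/\ point a b c 0 x0 = a, point a b c 0 x1 = b & point a b c 0 x2 = c].
Proof. by rewrite !mxE. Qed.

Definition horiz_line (c : k) : R3 k := 'X_x1 - c *: 'X_x2.
Definition vert_lines (m : nat) : R3 k := \prod_(j < m) ('X_x0 - j%:R *: 'X_x2).

Lemma meval_horiz_line c u : (horiz_line c).@[u] = u x1 - c * u x2.
Proof. by rewrite mevalB mevalZ !mevalXU. Qed.

Lemma meval_vert_lines m u :
  (vert_lines m).@[u] = \prod_(j < m) (u x0 - j%:R * u x2).
Proof.
rewrite /vert_lines (big_morph _ (mevalM u) (meval1 u)).
by apply: eq_bigr => j _; rewrite mevalB mevalZ !mevalXU.
Qed.

Lemma vert_lines_root m u (j : nat) :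
  (j < m)%N -> u x0 = j%:R * u x2 -> (vert_lines m).@[u] = 0.
Proof.
move=> lt_jm u0; rewrite meval_vert_lines (bigD1 (Ordinal lt_jm)) //=.
by rewrite u0 subrr mul0r.
Qed.

Lemma vert_lines_dvd (c : k) (m : nat) (g : R3 k) :
  (forall u, u x2 != 0 -> u x1 != c * u x2 ->
     forall j, (j < m)%N -> u x0 = j%:R * u x2 -> g.@[u] = 0) ->
  exists b, g = vert_lines m * b.
Proof.
elim: m g => [|m IH] g g_vanish.
  by exists g; rewrite /vert_lines big_ord0 mul1r.
have [h def_g] : exists h, g = vert_lines m * h.
  by apply: IH => u u2 u1 j /ltnW; apply: g_vanish.
rewrite {}def_g in g_vanish *.
have h_vanish u :
    u x2 != 0 -> u x1 != c * u x2 -> u x0 = m%:R * u x2 -> h.@[u] = 0.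
  move=> u2 u1 u0; move/eqP: (g_vanish u u2 u1 m (ltnSn m) u0).
  rewrite mevalM mulf_eq0 meval_vert_lines u0 => /orP [/prodf_eq0 [j _]|/eqP //].
  rewrite -mulrBl mulf_eq0 (negbTE u2) orbF -natrB ?(ltnW (ltn_ord j)) //.
  by rewrite ((pcharf0P k).1 k_char0) subn_eq0 leqNgt ltn_ord.
(* Here h0 = h (m x2, x1, x2) vanishes off the lines x2 = 0 and x1 = c x2. *)
have [q [h0 [def_h h0E]]] := mpoly_div_linear x0 x2 m%:R h.
suff h0_eq0 : h0 = 0.
  by exists q; rewrite def_h h0_eq0 addr0 /vert_lines big_ord_recr mulrA.
have : 'X_x2 * horiz_line c * h0 = 0.
  apply: mpoly_vanish_eq0 => u; rewrite !mevalM mevalXU meval_horiz_line h0E.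
  have [->|u2] := eqVneq (u x2) 0; first by rewrite !mul0r.
  have [->|u1] := eqVneq (u x1) (c * u x2); first by rewrite subrr mulr0 mul0r.
  by rewrite h_vanish ?mulr0.
move/eqP; rewrite mulf_eq0 => /orP [/eqP X2_line0|/eqP //].
have := congr1 (meval (point 0 (c + 1) 1 0)) X2_line0.
rewrite mevalM mevalXU meval_horiz_line meval0.
have [_ -> ->] := point_coords 0 (c + 1) 1.
by rewrite mulr1 [c + 1]addrC addrK mul1r => /eqP; rewrite oner_eq0.
Qed.

Lemma homog_of_degE d (f : R3 k) : homog_of_deg d f = (f \is d.-homog for mdeg).
Proof. by rewrite dhomogE. Qed.

Lemma dhomogXU (i : 'I_3) : ('X_i : R3 k) \is 1.-homog for mdeg.
Proof. by rewrite dhomogX; apply/eqP; apply: mdeg1. Qed.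

Lemma horiz_line_homog c : homog_of_deg 1 (horiz_line c).
Proof. by rewrite homog_of_degE rpredB ?rpredZ ?dhomogXU. Qed.

Lemma vert_lines_homog m : homog_of_deg m (vert_lines m).
Proof.
rewrite homog_of_degE /vert_lines.
elim: m => [|m IH]; first by rewrite big_ord0 dhomog1.
have factor_homog : ('X_x0 - m%:R *: 'X_x2 : R3 k) \is 1.-homog for mdeg.
  by rewrite rpredB ?rpredZ ?dhomogXU.
by rewrite big_ord_recr; have := dhomogM IH factor_homog; rewrite addn1.
Qed.

Lemma regular_seq2_vert_horiz c m :
  (0 < m)%N -> regular_seq2 (vert_lines m) (horiz_line c).
Proof.
move=> m_gt0; split; [|split].
- apply: contraTneq isT => vert0; have := congr1 (meval (point 1 0 0 0)) vert0.
  rewrite meval_vert_lines meval0 big1 => [/eqP|j _]; first by rewrite oner_eq0.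
  by have [-> _ ->] := point_coords 1 0 0; rewrite mulr0 subr0.
- move=> h [b hE]; apply: (vert_lines_dvd (c := c)) => u u2 u1 j lt_jm u0.
  move/eqP: (congr1 (meval u) hE); rewrite !mevalM (vert_lines_root lt_jm u0).
  by rewrite mul0r mulf_eq0 meval_horiz_line subr_eq0 (negbTE u1) => /eqP.
- case=> a [b /(congr1 (meval (point 0 c 1 0)))].
  have [e0 e1 e2] := point_coords 0 c 1.
  rewrite mevalD !mevalM meval1 meval_horiz_line (vert_lines_root (j := 0) m_gt0).
    by rewrite e1 e2 mulr1 subrr !mul0r addr0 => /eqP; rewrite oner_eq0.
  by rewrite e0 e2 mul0r.
Qed.

Definition row_points (c : k) (m : nat) : seq 'rV[k]_3 :=
  [seq point j%:R c 1 | j <- iota 0 m].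

Definition in_strip_off_line (Y : seq 'rV[k]_3) (c : k) (m : nat) :=
  forall P, P \in Y ->
    [/\ P 0 x2 = 1, P 0 x1 != c & exists2 a, (a < m)%N & P 0 x0 = a%:R].

Lemma strip_vert_lines_vanish Y c m :
  in_strip_off_line Y c m -> vanishing_ideal Y (vert_lines m).
Proof.
move=> Y_strip; apply/vanishing_idealP => P /Y_strip [P2 _ [a lt_am P0]] l _.
by apply: (vert_lines_root lt_am); rewrite P0 P2 mulr1 mulrC.
Qed.

Lemma vanishing_ideal_cat_row Y c m : in_strip_off_line Y c m -> forall f,
  bdl_ideal (vanishing_ideal Y) (vert_lines m) (horiz_line c) f <->
  vanishing_ideal (Y ++ row_points c m) f.
Proof.
move=> Y_strip f; have Y_vert u P l : P \in Y -> u =1 (fun i => l * P 0 i) ->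
    (vert_lines m).@[u] = 0.
  move=> /Y_strip [P2 _ [a lt_am P0]] uE.
  by apply: (vert_lines_root lt_am); rewrite !uE P0 P2 mulr1 mulrC.
have row_mem j : (j < m)%N -> point j%:R c 1 \in Y ++ row_points c m.
  by move=> lt_jm; rewrite mem_cat; apply/orP; right; apply/map_f; rewrite mem_iota.
split=> [[a [b [Ya ->]]]|f_vanish].
  apply/vanishing_idealP => P + l l_neq0; rewrite mem_cat mevalD !mevalM.
  case/orP=> [YP|/mapP [j]].
    rewrite (Y_vert _ P l YP) // ((vanishing_idealP _ _).1 Ya P YP l l_neq0).
    by rewrite mulr0 mul0r addr0.
  rewrite mem_iota => /andP [_ lt_jm] ->; have [e0 e1 e2] := point_coords j%:R c 1.
  rewrite meval_horiz_line (vert_lines_root lt_jm) /= ?e0 ?e2 ?mulr1 1?mulrC //.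
  by rewrite e1 [c * l]mulrC subrr mulr0 mul0r addr0.
have [q [g [def_f gE]]] := mpoly_div_linear x1 x2 c f.
have [b def_g] : exists b, g = vert_lines m * b.
  apply: (vert_lines_dvd (c := c)) => u u2 _ j lt_jm u0.
  rewrite gE -((vanishing_idealP _ _).1 f_vanish _ (row_mem j lt_jm) (u x2) u2).
  have [e0 e1 e2] := point_coords j%:R c 1.
  apply: meval_eq; apply: ord3_ind;
    by rewrite /subst_var /= ?e0 ?e1 ?e2 ?u0 ?mulr1 // mulrC.
exists q, b; split; last by rewrite def_f def_g.
apply/vanishing_idealP => P YP l l_neq0; have [P2 P1 _] := Y_strip P YP.
have YP' : P \in Y ++ row_points c m by rewrite mem_cat YP.
have /eqP := (vanishing_idealP _ _).1 f_vanish P YP' l l_neq0.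
rewrite def_f def_g mevalD !mevalM (Y_vert _ P l YP) // mul0r addr0.
rewrite mulf_eq0 meval_horiz_line /= => /orP [|/eqP //].
rewrite P2 mulr1 [c * l]mulrC -mulrBr mulf_eq0 (negbTE l_neq0) subr_eq0.
by rewrite (negbTE P1).
Qed.

Definition config_rows (T : seq nat) (n : nat) : seq 'rV[k]_3 :=
  flatten [seq row_points (size T - i.+1)%:R (nth 0%N T i) | i <- iota 0 n].

Lemma config_rowsS T n : config_rows T n.+1 =
  config_rows T n ++ row_points (size T - n.+1)%:R (nth 0%N T n).
Proof. by rewrite /config_rows iota0S map_rcons flatten_rcons. Qed.

Lemma config_rows_strip T n : pseudo_type_vector T -> (n < size T)%N ->
  in_strip_off_line (config_rows T n) (size T - n.+1)%:R (nth 0%N T n).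
Proof.
move=> T_ptv lt_nT P /flattenP [_ /mapP [i + ->] /mapP [j + ->]].
rewrite !mem_iota !add0n => /andP [_ lt_in] /andP [_ lt_j].
have [-> -> ->] := point_coords j%:R (size T - i.+1)%:R 1; split=> //.
  by rewrite eqr_nat_pchar0; apply/eqP; lia.
exists j => //; apply: leq_trans lt_j _.
by apply: (pseudo_type_vector_mono T_ptv); lia.
Qed.

Lemma config_rows_bdl T n : pseudo_type_vector T -> (n <= size T)%N ->
  exists I, bdl_obtainable I /\ forall f, I f <-> vanishing_ideal (config_rows T n) f.
Proof.
move=> T_ptv; elim: n => [|n IH] le_nT.
  by exists (fun _ => True); split=> [|f]; [exact: bdl_empty | split].
have [I [I_bdl IE]] := IH (ltnW le_nT).
have n_strip := config_rows_strip T_ptv le_nT.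
have [_ [T_pos _]] := T_ptv.
exists (bdl_ideal I (vert_lines (nth 0%N T n)) (horiz_line (size T - n.+1)%:R)); split.
  apply: bdl_step (vert_lines_homog _) (horiz_line_homog _) _ => //.
    by apply/IE; apply: strip_vert_lines_vanish n_strip.
  by apply: regular_seq2_vert_horiz; apply: T_pos.
move=> f; rewrite config_rowsS -vanishing_ideal_cat_row //.
by split=> -[a [b [Ia ->]]]; exists a, b; split=> //; apply/IE.
Qed.

(** * Hilbert function of a lower set of lattice points *)

Definition falling_fact (a : nat) : {poly k} :=
  \prod_(x <- [seq l%:R | l <- iota 0 a]) ('X - x%:P).

Lemma size_falling_fact a : size (falling_fact a) = a.+1.
Proof. by rewrite size_prod_XsubC size_map size_iota. Qed.

Lemma falling_fact_nat_eq0 (u a : nat) :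
  ((falling_fact a).[u%:R] == 0) = (u < a)%N.
Proof.
rewrite -rootE root_prod_XsubC mem_map ?mem_iota //.
by move=> x y /eqP; rewrite eqr_nat_pchar0 => /eqP.
Qed.

Lemma graded_poly_basis_span (b : nat -> {poly k}) :
  (forall i, size (b i) = i.+1) -> forall a (p : {poly k}), (size p <= a)%N ->
  exists c : nat -> k, p = \sum_(i < a) c i *: b i.
Proof.
move=> size_b; elim=> [|a IH] p size_p.
  by exists (fun=> 0); rewrite big_ord0; apply/size_poly_leq0P.
pose c := p`_a / lead_coef (b a).
have lc_neq0 : lead_coef (b a) != 0 by rewrite lead_coef_eq0 -size_poly_eq0 size_b.
have [c' p_rem] : exists c' : nat -> k, p - c *: b a = \sum_(i < a) c' i *: b i.
  apply: IH; apply/leq_sizeP => j le_aj; rewrite coefB coefZ.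
  have [<-|neq_aj] := eqVneq a j.
    have lcE : lead_coef (b a) = (b a)`_a by rewrite lead_coefE size_b.
    by rewrite /c -lcE divfK // subrr.
  have lt_aj : (a < j)%N by rewrite ltn_neqAle neq_aj.
  by rewrite !nth_default ?mulr0 ?subr0 ?size_b // (leq_trans size_p).
exists (fun i => if i == a then c else c' i).
rewrite big_ord_recr /= eqxx -[p](subrK (c *: b a)) p_rem; congr (_ + _).
by apply: eq_bigr => i _; rewrite /= (ltn_eqF (ltn_ord i)).
Qed.

Definition lattice_point (ab : nat * nat) : 'rV[k]_3 := point ab.1%:R ab.2%:R 1.

Definition monomial_eval_mx (X : seq 'rV[k]_3) (t : nat) :=
  \matrix_(m < #|{: monoms t}|, j < size X)
    ev (nth 0 X j) 'X_[val (val (enum_val m))] : 'M[k]_(_, _).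

Definition lattice_row (C : seq (nat * nat)) (P Q : {poly k}) :
    'rV[k]_(size (map lattice_point C)) :=
  \row_j (P.[(nth (0, 0)%N C j).1%:R] * Q.[(nth (0, 0)%N C j).2%:R]).

Lemma lattice_row_span C m (M : 'M_(m, size (map lattice_point C))) P Q
    (bP bQ : nat -> {poly k}) a a' :
  (forall l l', (l < a)%N -> (l' < a')%N ->
     (lattice_row C (bP l) (bQ l') <= M)%MS) ->
  (exists c : nat -> k, P = \sum_(l < a) c l *: bP l) ->
  (exists c : nat -> k, Q = \sum_(l < a') c l *: bQ l) ->
  (lattice_row C P Q <= M)%MS.
Proof.
move=> sub_M [c ->] [c' ->].
have -> : lattice_row C (\sum_(l < a) c l *: bP l) (\sum_(l < a') c' l *: bQ l) =
    \sum_(l < a) \sum_(l' < a') (c l * c' l') *: lattice_row C (bP l) (bQ l').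
  apply/rowP => j; rewrite !mxE !horner_sum big_distrlr summxE /=.
  apply: eq_bigr => l _; rewrite summxE; apply: eq_bigr => l' _.
  by rewrite !mxE !hornerZ mulrACA.
by apply: summx_sub => l _; apply: summx_sub => l' _; apply/scalemx_sub/sub_M.
Qed.

Lemma monomial_eval_row C t (m : 'I_#|{: monoms t}|) :
  let mm := val (val (enum_val m)) in
  row m (monomial_eval_mx (map lattice_point C) t) =
  lattice_row C 'X^(mm x0) 'X^(mm x1).
Proof.
apply/rowP => j; rewrite !mxE (nth_map (0, 0)%N) -?(size_map lattice_point) //.
case: (nth _ C j) => a b; rewrite /ev mevalX big_ord3 !hornerXn /=.
by have [-> -> ->] := point_coords a%:R b%:R 1; rewrite expr1n !mulr1.
Qed.

Lemma lattice_row_monomial_sub C t i i' : (i + i' <= t)%N ->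
  (lattice_row C 'X^i 'X^i' <= monomial_eval_mx (map lattice_point C) t)%MS.
Proof.
move=> le_t.
pose mm : 'X_{1..3} := [multinom (nth 0%N [:: i; i'; t - i - i'] l) | l < 3].
have mdeg_mm : mdeg mm = t by rewrite mdegE big_ord3 /= !mnmE /=; lia.
have lt_mm : (mdeg mm < t.+1)%N by rewrite mdeg_mm.
pose m : monoms t := exist _ (BMultinom lt_mm) (introT eqP mdeg_mm).
by apply: (eq_row_sub (enum_rank m)); rewrite monomial_eval_row enum_rankK /= !mnmE.
Qed.

Definition under_diag (C : seq (nat * nat)) (t : nat) :=
  [seq ab <- C | (ab.1 + ab.2 <= t)%N].

Definition falling_eval_mx C t :
    'M[k]_(size (under_diag C t), size (map lattice_point C)) :=
  \matrix_(r < size (under_diag C t))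
    lattice_row C (falling_fact (nth (0, 0)%N (under_diag C t) r).1)
                  (falling_fact (nth (0, 0)%N (under_diag C t) r).2).

Definition down_closed (C : seq (nat * nat)) := forall a b a' b',
  (a, b) \in C -> (a' <= a)%N -> (b' <= b)%N -> (a', b') \in C.

Lemma falling_eval_sub_monomial C t :
  (falling_eval_mx C t <= monomial_eval_mx (map lattice_point C) t)%MS.
Proof.
apply/row_subP => r; rewrite rowK.
have := mem_nth (0, 0)%N (ltn_ord r); rewrite mem_filter => /andP [le_t _].
have span_X a : exists c : nat -> k, falling_fact a = \sum_(l < a.+1) c l *: 'X^l.
  by apply: graded_poly_basis_span => [i|]; rewrite ?size_polyXn ?size_falling_fact.
apply: lattice_row_span (span_X _) (span_X _) => l l' lt_l lt_l'.
apply: lattice_row_monomial_sub; apply: leq_trans le_t.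
by apply: leq_add; rewrite -ltnS.
Qed.

Lemma lattice_row_falling_sub C t i i' : down_closed C -> (i + i' <= t)%N ->
  (lattice_row C (falling_fact i) (falling_fact i') <= falling_eval_mx C t)%MS.
Proof.
move=> C_down le_t; have [iC|iC] := boolP ((i, i') \in C).
  have : (i, i') \in under_diag C t by rewrite mem_filter le_t.
  rewrite -index_mem => lt_idx.
  by apply: (eq_row_sub (Ordinal lt_idx)); rewrite rowK /= nth_index // -index_mem.
suff -> : lattice_row C (falling_fact i) (falling_fact i') = 0 by apply: sub0mx.
apply/rowP => j; rewrite !mxE.
have lt_jC : (j < size C)%N by rewrite -(size_map lattice_point).
case E : (nth (0, 0)%N C j) => [u v] /=.
have uvC : (u, v) \in C by rewrite -E mem_nth.
apply/eqP; rewrite mulf_eq0 !falling_fact_nat_eq0 !ltnNge -negb_and.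
by apply: contra iC => /andP [le_iu le_i'v]; apply: C_down uvC le_iu le_i'v.
Qed.

Lemma monomial_sub_falling_eval C t : down_closed C ->
  (monomial_eval_mx (map lattice_point C) t <= falling_eval_mx C t)%MS.
Proof.
move=> C_down; apply/row_subP => m; rewrite monomial_eval_row /=.
set mm := val (val (enum_val m)).
have le_t : (mm x0 + mm x1 <= t)%N.
  by have /eqP <- := valP (enum_val m); rewrite -/mm mdegE big_ord3 addnA leq_addr.
have span_ff a : exists c : nat -> k, 'X^a = \sum_(l < a.+1) c l *: falling_fact l.
  by apply: graded_poly_basis_span => [i|]; rewrite ?size_polyXn ?size_falling_fact.
apply: lattice_row_span (span_ff _) (span_ff _) => l l' lt_l lt_l'.
apply: lattice_row_falling_sub => //; apply: leq_trans le_t.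
by apply: leq_add; rewrite -ltnS.
Qed.

(* Since (falling_fact a).[u] = 0 exactly when u < a, at the column of a cell
   of minimal degree in the support of u only the row of that cell survives. *)
Lemma falling_eval_row_free C t : uniq C -> row_free (falling_eval_mx C t).
Proof.
move=> C_uniq; apply: inj_row_free => u u_ker; apply/rowP => r0; rewrite mxE.
apply/eqP; apply: contraT => u_r0; set D := under_diag C t.
pose deg (r : 'I_(size D)) := ((nth (0, 0)%N D r).1 + (nth (0, 0)%N D r).2)%N.
case: (@arg_minnP _ r0 (fun r => u 0 r != 0) deg u_r0) => r u_r r_min.
case E : (nth (0, 0)%N D r) => [a b].
have abC : (a, b) \in C.
  by have := mem_nth (0, 0)%N (ltn_ord r); rewrite E mem_filter => /andP [].
have lt_j : (index (a, b) C < size (map lattice_point C))%N.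
  by rewrite size_map index_mem.
have := congr1 (fun M : 'rV_(size (map lattice_point C)) => M 0 (Ordinal lt_j)) u_ker.
rewrite !mxE (bigD1 r) //= big1 ?addr0.
  rewrite !mxE /= nth_index // E /= => /eqP; rewrite !mulf_eq0 (negbTE u_r).
  by rewrite !falling_fact_nat_eq0 !ltnn.
move=> r' r'_neq_r; rewrite !mxE /= nth_index //.
have [->|u_r'] := eqVneq (u 0 r') 0; first by rewrite mul0r.
case E' : (nth (0, 0)%N D r') => [a' b'] /=.
have := r_min r' u_r'; rewrite /deg E E' /= => le_deg.
apply/eqP; rewrite !mulf_eq0 (negbTE u_r') !falling_fact_nat_eq0 !ltnNge -negb_and /=.
apply: contra r'_neq_r => /andP [le_a'a le_b'b].
have [eq_a eq_b] : a' = a /\ b' = b by lia.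
apply/eqP/val_inj/eqP; rewrite -(nth_uniq (0, 0)%N (ltn_ord r') (ltn_ord r)).
  by rewrite E E' eq_a eq_b.
exact: filter_uniq.
Qed.

Lemma hilb_down_closed C t : uniq C -> down_closed C ->
  hilb (map lattice_point C) t = count (fun ab => ab.1 + ab.2 <= t)%N C.
Proof.
move=> C_uniq C_down; rewrite -size_filter -/(under_diag C t).
rewrite -(eqP (falling_eval_row_free t C_uniq)); apply/eqP.
by rewrite eqn_leq !mxrankS ?falling_eval_sub_monomial ?monomial_sub_falling_eval.
Qed.

End Char0Field.

(** * Hilbert function of the standard configuration *)

Definition row_cells (T : seq nat) (i : nat) : seq (nat * nat) :=
  [seq (j, size T - i.+1) | j <- iota 0 (nth 0 T i)].

Definition config_cells (T : seq nat) (n : nat) : seq (nat * nat) :=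
  flatten [seq row_cells T i | i <- iota 0 n].

Lemma config_cellsS T n : config_cells T n.+1 = config_cells T n ++ row_cells T n.
Proof. by rewrite /config_cells iota0S map_rcons flatten_rcons. Qed.

Lemma mem_config_cells T n a b : reflect
  (exists2 i, (i < n)%N & b = size T - i.+1 /\ (a < nth 0 T i)%N)
  ((a, b) \in config_cells T n).
Proof.
apply: (iffP flattenP) => [[_ /mapP [i + ->] /mapP [j + [-> ->]]]|[i lt_in [-> lt_a]]].
  by rewrite !mem_iota => /andP [_ ?] /andP [_ ?]; exists i.
by exists (row_cells T i); apply: map_f; rewrite mem_iota.
Qed.

Lemma config_cells_uniq T n : (n <= size T)%N -> uniq (config_cells T n).
Proof.
elim: n => [//|n IH] lt_nT.
rewrite config_cellsS cat_uniq (IH (ltnW lt_nT)) map_inj_uniq ?iota_uniq => [|x y [] //].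
rewrite andbT; apply/hasPn => -[a b] /mapP [j _ [-> ->]].
by apply/mem_config_cells => -[i lt_in [eq_b _]]; lia.
Qed.

Lemma config_cells_down_closed T :
  pseudo_type_vector T -> down_closed (config_cells T (size T)).
Proof.
move=> T_ptv a b a' b' /mem_config_cells [i lt_iT [-> lt_a]] le_a'a le_b'b.
apply/mem_config_cells; exists (size T - b'.+1); [lia | split; first lia].
apply: leq_ltn_trans le_a'a (leq_trans lt_a _); apply: (pseudo_type_vector_mono T_ptv); lia.
Qed.

Lemma std_config_cells (k : fieldType) T :
  std_config k T = map (@lattice_point k) (config_cells T (size T)).
Proof.
rewrite /std_config /config_cells map_flatten -map_comp; congr flatten.
by apply: eq_map => i /=; rewrite /row_cells -map_comp.
Qed.

Lemma count_iota_add_eq c m t :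
  count (fun j => j + c == t) (iota 0 m) = (c <= t < c + m).
Proof.
have [le_ct|lt_tc] := leqP c t; last first.
  by rewrite (@eq_count _ _ pred0) ?count_pred0 // => j /=; apply/eqP; lia.
rewrite (@eq_count _ _ (pred1 (t - c))) => [|j /=]; last by apply/eqP/eqP; lia.
by rewrite count_uniq_mem ?iota_uniq // mem_iota; lia.
Qed.

Definition row_hits (T : seq nat) (t i : nat) : bool :=
  size T - i.+1 <= t < size T - i.+1 + nth 0 T i.

Lemma count_config_cells_diag T t n :
  count (fun ab => ab.1 + ab.2 == t) (config_cells T n) = \sum_(i < n) row_hits T t i.
Proof.
elim: n => [|n IH]; first by rewrite big_ord0.
rewrite config_cellsS count_cat IH big_ord_recr /=; congr (_ + _).
by rewrite /row_cells count_map count_iota_add_eq.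
Qed.

Lemma count_leqS (T : Type) (f : T -> nat) (s : seq T) t :
  count (fun x => f x <= t.+1) s =
  count (fun x => f x <= t) s + count (fun x => f x == t.+1) s.
Proof. by elim: s => //= x s ->; rewrite leq_eqVlt ltnS; case: eqP => /= [->|]; lia. Qed.

Lemma dhilb_std_config (k : fieldType) T t : [pchar k]%R =i pred0 ->
  pseudo_type_vector T ->
  dhilb (std_config k T) t = Posz (\sum_(i < size T) row_hits T t i).
Proof.
move=> k_char0 T_ptv; rewrite -count_config_cells_diag std_config_cells /dhilb.
have hilbE := hilb_down_closed k_char0 _ (config_cells_uniq (leqnn _))
  (config_cells_down_closed T_ptv).
case: t => [|t]; rewrite !hilbE; first by congr Posz; apply: eq_count => ab; rewrite leqn0.
by rewrite count_leqS PoszD addrAC subrr add0r.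
Qed.

Definition repeats_next (T : seq nat) (i : nat) : bool :=
  (i.+1 < size T) && (nth 0 T i.+1 == nth 0 T i).

Lemma shifted_s_seqE T t i : pseudo_type_vector T -> i < size T ->
  (if size T - i.+1 <= t then s_seq T i (t - (size T - i.+1)) else 0) =
  (~~ repeats_next T i) * row_hits T t i +
  (if i is j.+1 then repeats_next T j * row_hits T t j else 0).
Proof.
move=> [_ [T_pos [T_mono T_strict]]] lt_iT; have := T_pos i lt_iT.
rewrite /s_seq /repeats_next /row_hits; case: i lt_iT => [|j] lt_iT pos_i.
  by repeat case: ifP; lia.
have := T_mono j lt_iT; have := T_strict j.
by repeat case: ifP; lia.
Qed.

Lemma std_O_seqE T t : pseudo_type_vector T ->
  std_O_seq T t = \sum_(i < size T) row_hits T t i.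
Proof.
move=> T_ptv; rewrite /std_O_seq.
under eq_bigr => i _ do rewrite (shifted_s_seqE t T_ptv (ltn_ord i)).
rewrite big_split /=.
have -> : \sum_(i < size T)
    (if nat_of_ord i is j.+1 then repeats_next T j * row_hits T t j else 0) =
    \sum_(i < size T) repeats_next T i * row_hits T t i.
  rewrite /repeats_next; case: (size T) => [|p]; first by rewrite !big_ord0.
  by rewrite big_ord_recl big_ord_recr /= ltnn add0n addn0.
rewrite -big_split; apply: eq_bigr => i _.
by case: (repeats_next T i); rewrite /= ?mul0n ?mul1n ?addn0.
Qed.

(** * Regularity *)

Definition row_end (T : seq nat) (i : nat) : nat := size T - i.+1 + nth 0 T i.

Lemma std_config_regularity (k : fieldType) T r : [pchar k]%R =i pred0 ->
  pseudo_type_vector T ->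
  (forall i, i < size T -> row_end T i <= r) ->
  (exists2 i, i < size T & row_end T i = r) ->
  is_regularity (std_config k T) r.
Proof.
move=> k_char0 T_ptv le_r [i0 lt_i0T end_i0]; split.
  rewrite dhilb_std_config // big1 // => i _.
  by rewrite /row_hits ltnNge (le_r i (ltn_ord i)) andbF.
move=> t lt_tr; rewrite dhilb_std_config //; apply/eqP; rewrite eqz_nat -lt0n.
have [_ [T_pos _]] := T_ptv.
have [i lt_iT hit] : exists2 i, i < size T & row_hits T t i.
  have [le_i0t|lt_ti0] := leqP (size T - i0.+1) t.
    by exists i0 => //; rewrite /row_hits le_i0t -/(row_end T i0) end_i0.
  exists (size T - t.+1); first lia.
  by have := T_pos (size T - t.+1); rewrite /row_hits; lia.
by rewrite (bigD1 (Ordinal lt_iT)) //= hit.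
Qed.

Definition zeros_separated (T : seq nat) := forall a b, a < b < size T ->
  deltaT T a = 0 -> deltaT T b = 0 -> exists c, a < c < b /\ 1 < deltaT T c.

Definition zero_then_ones_from (T : seq nat) (i : nat) := exists a,
  i <= a < size T /\ deltaT T a = 0 /\ forall c, a < c < size T -> deltaT T c = 1.

Lemma zero_then_ones_fromW T i j :
  i <= j -> zero_then_ones_from T j -> zero_then_ones_from T i.
Proof. by move=> le_ij [a [lt_a rest]]; exists a; split => //; lia. Qed.

Lemma row_end_succ T i : pseudo_type_vector T -> i.+1 < size T ->
  row_end T i + deltaT T i.+1 = row_end T i.+1 + 1.
Proof.
by move=> [_ [_ [T_mono _]]] lt_iT; have := T_mono i lt_iT; rewrite /row_end /=; lia.
Qed.

Lemma row_end_ones T i c : pseudo_type_vector T -> i <= c < size T ->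
  (forall j, i < j <= c -> deltaT T j = 1) -> row_end T i = row_end T c.
Proof.
move=> T_ptv; elim: c => [|c IH] lt_c ones; first by have -> : i = 0 by lia.
have [->//|ne_ic] := eqVneq i c.+1.
have := row_end_succ T_ptv (_ : c.+1 < size T); rewrite ones; last by lia.
by rewrite IH => [|//|j ?]; [lia | lia | apply: ones; lia].
Qed.

Lemma row_end_last T : 0 < size T -> row_end T (size T).-1 = nth 0 T (size T).-1.
Proof. by move=> T_gt0; rewrite /row_end prednK // subnn. Qed.

(* Going left, row_end T i = row_end T i.+1 + 1 - deltaT T i.+1 rises only at
   zeros of deltaT T, and by separation the first entry other than 1 to the
   right of a zero exceeds 1, which has already lowered row_end by one. *)
Lemma row_end_bound T : pseudo_type_vector T -> zeros_separated T ->
  forall i, i < size T ->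
  row_end T i <= (nth 0 T (size T).-1).+1 /\
  (nth 0 T (size T).-1 < row_end T i -> zero_then_ones_from T i.+1).
Proof.
move=> T_ptv T_sep i lt_iT; set mp := nth 0 T (size T).-1.
have T_gt0 : 0 < size T by lia.
have [n] := ubnP (size T - i); elim: n i lt_iT => // n IH i lt_iT lt_n.
have [lt_i1T|le_Ti1] := ltnP i.+1 (size T); last first.
  have -> : i = (size T).-1 by lia.
  by rewrite row_end_last // ltnn.
have IH' c : i < c < size T ->
    row_end T c <= mp.+1 /\ (mp < row_end T c -> zero_then_ones_from T c.+1).
  by move=> lt_c; apply: IH; lia.
have step := row_end_succ T_ptv lt_i1T.
have [delta0|delta_pos] := posnP (deltaT T i.+1); last first.
  have /IH' [le_end ztf] : i < i.+1 < size T by lia.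
  by split=> [|lt_mp]; [lia | apply: zero_then_ones_fromW (ztf _); lia].
case: (first_counterexample (fun c => deltaT T c == 1) i.+1 (size T)).
  move=> ones; have end_i1 : row_end T i.+1 = mp.
    rewrite (@row_end_ones _ _ (size T).-1) ?row_end_last // => [|j lt_j]; first lia.
    by apply/eqP/ones; lia.
  by split=> [|_]; [lia | exists i.+1; split; [lia | split=> // c /ones /eqP]].
move=> [c [lt_c /= delta_c ones]].
have end_i1 : row_end T i.+1 = row_end T c.-1.
  by apply: row_end_ones => // [|j lt_j]; [lia | apply/eqP/ones; lia].
have delta_c2 : 1 < deltaT T c.
  have [delta_c0|] := posnP (deltaT T c); last by move: delta_c; lia.
  have [|c' [lt_c' delta_c']] := T_sep i.+1 c _ delta0 delta_c0; first lia.
  by move/eqP: (ones c' lt_c'); lia.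
have /(row_end_succ T_ptv) : c.-1.+1 < size T by lia.
rewrite prednK => [step_c|]; last by lia.
have /IH' [le_end ztf] : i < c < size T by lia.
by split=> [|lt_mp]; [lia | apply: zero_then_ones_fromW (ztf _); lia].
Qed.

Lemma std_config_regularity_separated (k : fieldType) T : [pchar k]%R =i pred0 ->
  pseudo_type_vector T -> zeros_separated T ->
  (zero_then_ones_from T 0 -> is_regularity (std_config k T) (nth 0 T (size T).-1).+1) /\
  (~ zero_then_ones_from T 0 -> is_regularity (std_config k T) (nth 0 T (size T).-1)).
Proof.
move=> k_char0 T_ptv T_sep; have bound := row_end_bound T_ptv T_sep.
have [T_gt0 [T_pos _]] := T_ptv.
split=> [[a [lt_aT [delta_a ones]]]|no_tail]; apply: std_config_regularity => //.
- by move=> i /bound [].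
- have a_gt0 : 0 < a.
    case: a lt_aT delta_a {ones} => // lt_0T; have := T_pos 0 lt_0T; rewrite /deltaT; lia.
  exists a.-1; first lia.
  have end_a : row_end T a = row_end T (size T).-1.
    by apply: row_end_ones => // [|j lt_j]; [lia | apply: ones; lia].
  have /(row_end_succ T_ptv) : a.-1.+1 < size T by lia.
  by rewrite prednK // delta_a end_a row_end_last //; lia.
- move=> i /bound [le_end tail]; rewrite leqNgt; apply/negP => /tail.
  by move/(zero_then_ones_fromW (leq0n _)).
- by exists (size T).-1; rewrite ?row_end_last //; lia.
Qed.

Definition paired_type (n : nat) : seq nat := [seq (i %/ 2).+1 | i <- iota 0 n.*2].

Lemma size_paired_type n : size (paired_type n) = n.*2.
Proof. by rewrite size_map size_iota. Qed.

Lemma nth_paired_type n i : i < n.*2 -> nth 0 (paired_type n) i = (i %/ 2).+1.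
Proof. by move=> lt_i; rewrite (nth_map 0) ?size_iota // nth_iota. Qed.

Lemma paired_type_ptv n : 0 < n -> pseudo_type_vector (paired_type n).
Proof.
move=> n_gt0; rewrite /pseudo_type_vector size_paired_type.
by split; [|split; [|split]] => [|i lt_i|i lt_i|i lt_i]; rewrite ?nth_paired_type //; lia.
Qed.

Lemma paired_type_regularity (k : fieldType) n : [pchar k]%R =i pred0 -> 0 < n ->
  is_regularity (std_config k (paired_type n)) n.*2.
Proof.
move=> k_char0 n_gt0; apply: std_config_regularity (paired_type_ptv n_gt0) _ _ => //.
  by move=> i; rewrite /row_end size_paired_type => lt_i; rewrite nth_paired_type //; lia.
by exists 0; rewrite /row_end size_paired_type ?nth_paired_type //; lia.
Qed.

Lemma regularity_exceeds_last (k : fieldType) (N : nat) : [pchar k]%R =i pred0 ->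
  exists T : seq nat, pseudo_type_vector T /\
     (exists a b, a < b < size T /\ deltaT T a = 0 /\ deltaT T b = 0 /\
        forall c, a < c < b -> deltaT T c <= 1) /\
     exists r, is_regularity (std_config k T) r /\ nth 0 T (size T).-1 + N <= r.
Proof.
move=> k_char0; exists (paired_type N.+2); split; [exact: paired_type_ptv | split].
- exists 1, 3; rewrite size_paired_type; split; first lia.
  split; [|split => [|c lt_c]]; last have -> : c = 2 by lia.
  1-3: by rewrite /deltaT !nth_paired_type.
- exists (N.+2).*2; split; first exact: paired_type_regularity.
  by rewrite size_paired_type nth_paired_type; lia.
Qed.

Local Open Scope ring_scope.

Theorem proposition3p6 :
  forall (k : fieldType), [pchar k] =i pred0 ->
  (forall T : seq nat, pseudo_type_vector T ->
     let X := std_config k T in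
     let p := size T in
     let mp := nth 0%N T p.-1 in
     (* (i) *)
     (exists I : {mpoly k[3]} -> Prop, bdl_obtainable I /\
        forall f, I f <-> vanishing_ideal X f) /\
     (* (ii) *)
     (forall t, dhilb X t = (std_O_seq T t)%:Z) /\
     (* (iii) *)
     ((forall a b, (a < b < p)%N -> deltaT T a = 0%N -> deltaT T b = 0%N ->
         exists c, (a < c < b)%N /\ (1 < deltaT T c)%N) ->
      ((exists a, (a < p)%N /\ deltaT T a = 0%N /\
          forall c, (a < c < p)%N -> deltaT T c = 1%N) ->
         is_regularity X mp.+1) /\
      (~ (exists a, (a < p)%N /\ deltaT T a = 0%N /\
          forall c, (a < c < p)%N -> deltaT T c = 1%N) ->
         is_regularity X mp))) /\
  (* (iv) *)
  (forall N : nat, exists T : seq nat, pseudo_type_vector T /\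
     (exists a b, (a < b < size T)%N /\ deltaT T a = 0%N /\ deltaT T b = 0%N /\
        forall c, (a < c < b)%N -> (deltaT T c <= 1)%N) /\
     exists r, is_regularity (std_config k T) r /\
        (nth 0%N T (size T).-1 + N <= r)%N).
Proof.
move=> k k_char0; split=> [T T_ptv X p mp|N]; last exact: regularity_exceeds_last.
split; [|split].
- exact: config_rows_bdl T_ptv (leqnn _).
- by move=> t; rewrite /X dhilb_std_config // std_O_seqE.
- exact: std_config_regularity_separated.
Qed.
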